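(* Let $\mathbb{C}$ be a majority category with finite products, $n\geqslant 3$, and $R$ a subobject of $A_1\times A_2\times\cdots\times A_n$. Let $a_k:S\to A_k$ ($k=1,\dots,n$), $x:S\to A_1$, $y:S\to A_2$, $z:S\to A_3$ be morphisms. If $(x,a_2,a_3,\dots,a_n)\in_S R$, $(a_1,y,a_3,\dots,a_n)\in_S R$ and $(a_1,a_2,z,a_4,\dots,a_n)\in_S R$, then $(a_1,a_2,a_3,\dots,a_n)\in_S R$.
   Context: For a morphism $w:S\to W$ and a subobject $A$ of $W$, $w\in_S A$ means $w$ factors through a (any) mono representing $A$. A ternary relation $R\leqslant X\times Y\times Z$ is majority-selecting if for all $S$ and $x,x':S\to X$, $y,y':S\to Y$, $z,z':S\to Z$: $(x,y,z')\in_S R$, $(x,y',z)\in_S R$, $(x',y,z)\in_S R$ imply $(x,y,z)\in_S R$. A category with products is a majority category if every ternary relation (subobject of a product of three objects) is majority-selecting. *)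

From mathcomp Require Import all_boot.
Set Implicit Arguments.
Unset Strict Implicit.
Unset Printing Implicit Defensive.

Record category := Category {
  Ob :> Type;
  Hom : Ob -> Ob -> Type;
  idm : forall A, Hom A A;
  comp : forall A B C, Hom B C -> Hom A B -> Hom A C;
  comp_assoc : forall A B C D (h : Hom C D) (g : Hom B C) (f : Hom A B),
      comp h (comp g f) = comp (comp h g) f;
  comp_id_l : forall A B (f : Hom A B), comp (idm B) f = f;
  comp_id_r : forall A B (f : Hom A B), comp f (idm A) = f
}.
Arguments Hom {c}.
Arguments idm {c}.
Arguments comp {c A B C}.

Record finite_products (C : category) := FiniteProducts {
  prod : forall n, ('I_n -> C) -> C;
  proj : forall n (A : 'I_n -> C) (i : 'I_n), Hom (prod A) (A i);
  ptuple : forall n (A : 'I_n -> C) (S : C), (forall i, Hom S (A i)) -> Hom S (prod A);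
  proj_tuple : forall n (A : 'I_n -> C) S (f : forall i, Hom S (A i)) i,
      comp (proj A i) (ptuple f) = f i;
  tuple_unique : forall n (A : 'I_n -> C) S (f : forall i, Hom S (A i)) (g : Hom S (prod A)),
      (forall i, comp (proj A i) g = f i) -> g = ptuple f
}.
Arguments prod {C} _ {n}.
Arguments proj {C} _ {n} A i.
Arguments ptuple {C} _ {n A S}.

Definition mono (C : category) (A B : C) (m : Hom A B) : Prop :=
  forall S (g h : Hom S A), comp m g = comp m h -> g = h.

Record subobject (C : category) (W : C) := Subobject {
  sub_dom : C;
  sub_arr : Hom sub_dom W;
  sub_mono : mono sub_arr
}.

(* w \in_S R : w factors through the representing mono of R. *)
Definition mem_at (C : category) (S W : C) (w : Hom S W) (R : subobject W) : Prop :=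
  exists h : Hom S (sub_dom R), comp (sub_arr R) h = w.

(* A ternary relation R <= A 0 x A 1 x A 2 is majority-selecting.  The triple
   (x,y,z) is a : forall i : 'I_3, Hom S (A i); (x,y,z') is a with the
   entry 2 replaced by z', etc. *)
Definition majority_selecting (C : category) (P : finite_products C)
    (A : 'I_3 -> C) (R : subobject (prod P A)) : Prop :=
  forall (S : C) (a : forall i : 'I_3, Hom S (A i))
         (x' : Hom S (A ord0)) (y' : Hom S (A (inord 1))) (z' : Hom S (A (inord 2))),
    mem_at (ptuple P (dfwith a z')) R ->
    mem_at (ptuple P (dfwith a y')) R ->
    mem_at (ptuple P (dfwith a x')) R ->
    mem_at (ptuple P a) R.

Definition majority_category (C : category) (P : finite_products C) : Prop :=
  forall (A : 'I_3 -> C) (R : subobject (prod P A)), majority_selecting R.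

From Pilot Require Import Defs.
From mathcomp Require Import all_boot.
Set Implicit Arguments.
Unset Strict Implicit.
Unset Printing Implicit Defensive.

Local Notation comp := Defs.comp.

(* Regroup A_1 x ... x A_n as A_1 x A_2 x (A_3 x ... x A_n).  The comparison
   map into the regrouped product is mono, so composing with it turns R into a
   ternary relation whose generalized elements are exactly the regrouped
   elements of R.  The three hypotheses are then the premises of majority
   selection for this ternary relation, with third coordinates
   (a_3, ..., a_n), (a_3, ..., a_n) and (z, a_4, ..., a_n). *)

Lemma eq_dfwith (I : eqType) (T : I -> Type) (f g : forall i, T i) i0 (w : T i0) :
  g i0 = w -> (forall i, i0 != i -> g i = f i) -> forall i, g i = dfwith f w i.
Proof. by move=> g_i0 g_f i; case: dfwithP => [|j /g_f]. Qed.

Lemma mono_comp (C : category) (X Y Z : C) (g : Hom Y Z) (f : Hom X Y) :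
  mono g -> mono f -> mono (comp g f).
Proof.
by move=> mono_g mono_f S h h'; rewrite -!comp_assoc => /mono_g /mono_f.
Qed.

Section MonoImage.
Variables (C : category) (W W' : C) (m : Hom W W') (mono_m : mono m).

Definition subobject_image (R : subobject W) : subobject W' :=
  Subobject (mono_comp mono_m (@sub_mono _ _ R)).

Lemma mem_at_image S (w : Hom S W) (R : subobject W) :
  mem_at (comp m w) (subobject_image R) <-> mem_at w R.
Proof.
split=> -[h hw]; exists h; last by rewrite /= -comp_assoc hw.
by apply: mono_m; rewrite comp_assoc.
Qed.

End MonoImage.

Section Products.
Variables (C : category) (P : finite_products C).

Lemma ptuple_ext n (A : 'I_n -> C) S (f g : forall i, Hom S (A i)) :
  (forall i, f i = g i) -> ptuple P f = ptuple P g.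
Proof. by move=> fg; apply: tuple_unique => i; rewrite proj_tuple. Qed.

Lemma ptuple_inj n (A : 'I_n -> C) S (f g : forall i, Hom S (A i)) :
  ptuple P f = ptuple P g -> forall i, f i = g i.
Proof. by move=> fg i; rewrite -(proj_tuple P f) fg proj_tuple. Qed.

Lemma ptuple_eta n (A : 'I_n -> C) S (g : Hom S (prod P A)) :
  ptuple P (fun i => comp (proj P A i) g) = g.
Proof. by symmetry; apply: tuple_unique. Qed.

Lemma comp_ptuple n (A : 'I_n -> C) S T (f : forall i, Hom S (A i)) (h : Hom T S) :
  comp (ptuple P f) h = ptuple P (fun i => comp (f i) h).
Proof. by apply: tuple_unique => i; rewrite comp_assoc proj_tuple. Qed.

(* [inord 1 : 'I_3] does not reduce to a literal ordinal, so a family defined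
   by matching on [val i] is not computed at it; it is at [Ordinal _]. *)
Lemma majority_selecting_ord (A : 'I_3 -> C) (R : subobject (prod P A)) :
  majority_selecting R ->
  forall S (a : forall i, Hom S (A i)) (x' : Hom S (A ord0))
         (y' : Hom S (A (@Ordinal 3 1 isT))) (z' : Hom S (A (@Ordinal 3 2 isT))),
    mem_at (ptuple P (dfwith a z')) R ->
    mem_at (ptuple P (dfwith a y')) R ->
    mem_at (ptuple P (dfwith a x')) R ->
    mem_at (ptuple P a) R.
Proof.
rewrite /majority_selecting.
have ->: inord 1 = @Ordinal 3 1 isT by apply: val_inj; rewrite /= inordK.
by have ->: inord 2 = @Ordinal 3 2 isT by apply: val_inj; rewrite /= inordK.
Qed.

End Products.

Section Regroup.
Variables (C : category) (P : finite_products C) (n : nat) (A : 'I_n -> C).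
Variables (i1 i2 : 'I_n) (hi1 : i1 = 0 :> nat) (hi2 : i2 = 1 :> nat).

Lemma ord_tail_subproof (j : 'I_(n - 2)) : 2 + j < n.
Proof. by rewrite -ltn_subRL. Qed.

Definition ord_tail (j : 'I_(n - 2)) : 'I_n := Ordinal (ord_tail_subproof j).

Definition regroup_obj (i : 'I_3) : C :=
  match val i with
  | 0 => A i1
  | 1 => A i2
  | _ => prod P (fun j => A (ord_tail j))
  end.

Definition regroup S (c : forall k, Hom S (A k)) (i : 'I_3) : Hom S (regroup_obj i) :=
  match val i as v return
    Hom S (match v with 0 => A i1 | 1 => A i2 | _ => prod P (fun j => A (ord_tail j)) end)
  with
  | 0 => c i1
  | 1 => c i2
  | _ => ptuple P (fun j => c (ord_tail j))
  end.

Lemma regroup_comp S T (c : forall k, Hom S (A k)) (h : Hom T S) i :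
  comp (regroup c i) h = regroup (fun k => comp (c k) h) i.
Proof. by case: i => -[|[|i]] ? //=; rewrite comp_ptuple. Qed.

Lemma regroup_ext S (c c' : forall k, Hom S (A k)) :
  (forall k, c k = c' k) -> forall i, regroup c i = regroup c' i.
Proof. by move=> e [[|[|i]] ?] /=; [exact: e | exact: e | exact: ptuple_ext]. Qed.

Lemma regroup_inj S (c c' : forall k, Hom S (A k)) :
  (forall i, regroup c i = regroup c' i) -> forall k, c k = c' k.
Proof.
move=> e; case=> -[|[|k]] lt_k.
- by rewrite (_ : Ordinal lt_k = i1); [exact: e ord0 | apply: val_inj].
- by rewrite (_ : Ordinal lt_k = i2); [exact: e (@Ordinal 3 1 isT) | apply: val_inj].
have lt_k' : k < n - 2 by rewrite ltn_subRL.
rewrite (_ : Ordinal lt_k = ord_tail (Ordinal lt_k')); last exact: val_inj.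
have := f_equal (comp (proj P _ (Ordinal lt_k'))) (e (@Ordinal 3 2 isT)).
by rewrite /= !proj_tuple.
Qed.

Definition regroup_hom : Hom (prod P A) (prod P regroup_obj) :=
  ptuple P (regroup (proj P A)).

Lemma regroup_hom_tuple S (c : forall k, Hom S (A k)) :
  comp regroup_hom (ptuple P c) = ptuple P (regroup c).
Proof.
rewrite comp_ptuple; apply: ptuple_ext => i; rewrite regroup_comp.
by apply: regroup_ext => k; rewrite proj_tuple.
Qed.

Lemma regroup_hom_mono : mono regroup_hom.
Proof.
move=> S g h; rewrite -(ptuple_eta g) -(ptuple_eta h) !regroup_hom_tuple.
by move=> /ptuple_inj/regroup_inj e; apply: ptuple_ext.
Qed.

Lemma mem_at_regroup S (c : forall k, Hom S (A k)) (R : subobject (prod P A)) :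
  mem_at (ptuple P (regroup c)) (subobject_image regroup_hom_mono R) <->
  mem_at (ptuple P c) R.
Proof. by rewrite -regroup_hom_tuple; exact: mem_at_image. Qed.

Section Dfwith.
Variables (S : C) (a : forall k, Hom S (A k)).

Lemma regroup_dfwith1 (x : Hom S (A i1)) i :
  regroup (dfwith a x) i = dfwith (regroup a) (x : Hom S (regroup_obj ord0)) i.
Proof.
apply: eq_dfwith => [|[[|[|i']] ?] // _]; rewrite /regroup /=; first exact: dfwith_in.
  by rewrite dfwith_out // -val_eqE /= hi1 hi2.
by apply: ptuple_ext => j; rewrite dfwith_out // -val_eqE /= hi1.
Qed.

Lemma regroup_dfwith2 (y : Hom S (A i2)) i :
  regroup (dfwith a y) i =
  dfwith (regroup a) (y : Hom S (regroup_obj (@Ordinal 3 1 isT))) i.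
Proof.
apply: eq_dfwith => [|[[|[|i']] ?] // _]; rewrite /regroup /=; first exact: dfwith_in.
  by rewrite dfwith_out // -val_eqE /= hi1 hi2.
by apply: ptuple_ext => j; rewrite dfwith_out // -val_eqE /= hi2.
Qed.

Lemma regroup_dfwith3 (i3 : 'I_n) (hi3 : i3 = 2 :> nat) (z : Hom S (A i3)) i :
  regroup (dfwith a z) i =
  dfwith (regroup a)
    (ptuple P (fun j => dfwith a z (ord_tail j)) : Hom S (regroup_obj (@Ordinal 3 2 isT))) i.
Proof.
apply: eq_dfwith => [//|[[|[|[|i']]] ?] // _]; rewrite /regroup /=.
  by rewrite dfwith_out // -val_eqE /= hi1 hi3.
by rewrite dfwith_out // -val_eqE /= hi2 hi3.
Qed.

End Dfwith.

End Regroup.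

Theorem lemma5p6 (C : category) (P : finite_products C) (HC : majority_category P)
  (n : nat) (hn : 3 <= n) (A : 'I_n -> C) (R : subobject (prod P A))
  (i1 i2 i3 : 'I_n) (hi1 : nat_of_ord i1 = 0) (hi2 : nat_of_ord i2 = 1)
  (hi3 : nat_of_ord i3 = 2)
  (S : C) (a : forall k : 'I_n, Hom S (A k))
  (x : Hom S (A i1)) (y : Hom S (A i2)) (z : Hom S (A i3)) :
  mem_at (ptuple P (dfwith a x)) R ->
  mem_at (ptuple P (dfwith a y)) R ->
  mem_at (ptuple P (dfwith a z)) R ->
  mem_at (ptuple P a) R.
Proof.
move=> Hx Hy Hz; apply/(mem_at_regroup hi1 hi2).
apply: (majority_selecting_ord (HC _ _) (x' := x) (y' := y)
          (z' := ptuple P (fun j => dfwith a z (ord_tail j)))).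
- by rewrite -(ptuple_ext P (regroup_dfwith3 P hi1 hi2 a hi3 z)); apply/mem_at_regroup.
- by rewrite -(ptuple_ext P (regroup_dfwith2 P hi1 hi2 a y)); apply/mem_at_regroup.
- by rewrite -(ptuple_ext P (regroup_dfwith1 P hi1 hi2 a x)); apply/mem_at_regroup.
Qed.
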